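(* For the propositional CNF formula $MAP_n^1$ (defined in the context), every resolution refutation of $MAP_n^1$ has size exponential in $n$.
   Context: MAP planning domain. Fix $n\ge 2$. The map is an undirected graph with $3n-3$ nodes: a centre $L^0$; a path (branch 1) $L^0 - L_1^1 - L_1^2 - \dots - L_1^{2n-3}$; and, for each $i=2,\dots,n$, a single node $L_i^1$ adjacent to $L^0$. Facts are $at\text{-}x$ and $visited\text{-}x$ for nodes $x$. For every edge $\{x,y\}$ and both orientations there is an action $move\text{-}x\text{-}y$ with precondition $\{at\text{-}x\}$, add effects $\{at\text{-}y, visited\text{-}y\}$ and delete effect $\{at\text{-}x\}$. The initial state is $\{at\text{-}L^0\}$. For $k\in\{1,3,\dots,2n-3\}$ the goal of task $MAP_n^k$ is: for $k=1$, $\{visited\text{-}L_1^1,\dots,visited\text{-}L_n^1\}$; each increase of $k$ by 2 moves the branch-1 goal two steps further out along branch 1 (the goal becomes $visited\text{-}L_1^k$) and drops one of the goals $visited\text{-}L_i^1$, $i\ge 2$; for $k=2n-3$ the goal is $\{visited\text{-}L_1^{2n-3}, visited\text{-}L_2^1\}$. The CNF formula $MAP_n^k$ is the standard Graphplan-based (Blackbox-style) SAT encoding of task $MAP_n^k$ with $T=2n-2$ time steps (one fewer than the length $2n-1$ of a shortest plan, so the formula is unsatisfiable). Build the Graphplan planning graph from the initial state, with a NOOP action $NOOP\text{-}p$ (precondition $\{p\}$, add $\{p\}$) for every fact $p$. For each time step $t=1,\dots,T$ there is a Boolean variable $a(t)$ for every action $a$ (including NOOPs) present in action layer $t$ of the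 planning graph. Clauses: (i) goal clauses: for each goal fact $g$, the clause $\{a(T): g\in add(a)\}$; (ii) precondition clauses: for each variable $a(t)$ with $t\ge 2$ and each $p\in pre(a)$, the clause $\{\neg a(t)\}\cup\{a'(t-1): p\in add(a')\}$; (iii) mutex clauses $\{\neg a(t),\neg a'(t)\}$ for each pair of actions that Graphplan marks mutually exclusive at layer $t$ (interference: one deletes a precondition or add effect of the other; or competing needs: mutually exclusive preconditions). In this encoding any two move actions at the same time step are mutually exclusive. A resolution refutation is a derivation of the empty clause by the resolution rule; its size is the number of clauses in it. *)

From mathcomp Require Import all_boot.
Set Implicit Arguments.
Unset Strict Implicit.
Unset Printing Implicit Defensive.

Section Resolution.
Variable V : finType.
(* a literal is a pair (variable, polarity); true = positive literal *)
Definition lit := (V * bool)%type.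
Definition clause := {set lit}.

Definition resolvent (C D E : clause) : bool :=
  [exists v : V, [&& (v, true) \in C, (v, false) \in D &
                    E == (C :\ (v, true)) :|: (D :\ (v, false))]].

Definition refutation (Phi : {set clause}) (pi : seq clause) : bool :=
  [&& pi != [::], last set0 pi == set0 &
   [forall i : 'I_(size pi),
      (nth set0 pi i \in Phi) ||
      [exists j : 'I_i, exists k : 'I_i,
         resolvent (nth set0 pi j) (nth set0 pi k) (nth set0 pi i)]]].
End Resolution.

Section Graphplan.
Variables (F B : finType) (pre add del : B -> {set F}).

(* actions of the planning graph: base actions and NOOP-p for each fact p *)
Definition Act := (B + F)%type.
Definition preX (a : Act) : {set F} :=
  match a with inl b => pre b | inr p => [set p] end.
Definition addX (a : Act) : {set F} :=
  match a with inl b => add b | inr p => [set p] end.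
Definition delX (a : Act) : {set F} :=
  match a with inl b => del b | inr _ => set0 end.

(* a fact layer: the set of facts present and the set of mutex fact pairs *)
Definition layerT := ({set F} * {set (F * F)})%type.

Definition actions_at (L : layerT) : {set Act} :=
  [set a | (preX a \subset L.1) &&
           [forall p in preX a, forall q in preX a, (p, q) \notin L.2]].

Definition interferes (a b : Act) : bool :=
  [exists p in delX a, (p \in preX b) || (p \in addX b)].

Definition amutex (L : layerT) (a b : Act) : bool :=
  (a != b) && [|| interferes a b, interferes b a |
                 [exists p in preX a, exists q in preX b, (p, q) \in L.2]].

Definition next_layer (L : layerT) : layerT :=
  let As := actions_at L in
  let Fs := \bigcup_(a in As) addX a in
  (Fs, [set pq : F * F | [&& pq.1 \in Fs, pq.2 \in Fs, pq.1 != pq.2 &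
         [forall a in As, forall b in As,
            (pq.1 \in addX a) ==> (pq.2 \in addX b) ==> amutex L a b]]]).

Variable init : {set F}.

Definition fact_layer (t : nat) : layerT := iter t next_layer (init, set0).
Definition act_layer (t : nat) : {set Act} := actions_at (fact_layer t.-1).
Definition act_mutex (t : nat) (a b : Act) : bool := amutex (fact_layer t.-1) a b.

Variables (goal : {set F}) (T : nat).

(* propositional variables a(t), t = 1..T (time 0 is never used) *)
Definition pvar := ('I_T.+1 * Act)%type.

Definition goal_clauses : {set clause pvar} :=
  [set [set ((ord_max, a), true) | a in act_layer T & g \in addX a]
  | g in goal].

Definition pre_clauses : {set clause pvar} :=
  [set [set ((x.1.1, x.1.2), false)] :|:
       [set ((inord x.1.1.-1, a'), true)
       | a' in act_layer x.1.1.-1 & x.2 \in addX a']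
  | x : 'I_T.+1 * Act * F
  & [&& 1 < x.1.1, x.1.2 \in act_layer x.1.1 & x.2 \in preX x.1.2]].

Definition mutex_clauses : {set clause pvar} :=
  [set [set ((x.1.1, x.1.2), false); ((x.1.1, x.2), false)]
  | x : 'I_T.+1 * Act * Act
  & [&& 0 < x.1.1, x.1.2 \in act_layer x.1.1, x.2 \in act_layer x.1.1 &
        act_mutex x.1.1 x.1.2 x.2]].

Definition gp_cnf : {set clause pvar} :=
  goal_clauses :|: pre_clauses :|: mutex_clauses.
End Graphplan.

Section MAP.
Variable n : nat.

(* None = L^0 ; Some (inl k) = L_1^(k+1), k < 2n-3 ;
   Some (inr i) = L_(i+2)^1, i < n-1 *)
Definition node := option ('I_(2 * n - 3) + 'I_(n - 1)).

Definition edge (x y : node) : bool :=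
  match x, y with
  | None, Some (inl k) => val k == 0
  | None, Some (inr _) => true
  | Some (inl k), Some (inl k') => val k' == (val k).+1
  | _, _ => false
  end.
Definition adj (x y : node) : bool := edge x y || edge y x.

(* facts: (x, true) = at-x, (x, false) = visited-x *)
Definition fact := (node * bool)%type.
Definition at_ (x : node) : fact := (x, true).
Definition visited (x : node) : fact := (x, false).

Definition move := {xy : node * node | adj xy.1 xy.2}.
Definition move_pre (m : move) : {set fact} := [set at_ (val m).1].
Definition move_add (m : move) : {set fact} :=
  [set at_ (val m).2; visited (val m).2].
Definition move_del (m : move) : {set fact} := [set at_ (val m).1].

Definition map_init : {set fact} := [set at_ None].

Definition level1 (x : node) : bool :=
  match x with Some (inl k) => val k == 0 | Some (inr _) => true | None => false end.
Definition map1_goal : {set fact} := [set visited x | x in level1].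

Definition MAP1_cnf : {set clause (pvar fact move (2 * n - 2))} :=
  gp_cnf move_pre move_add move_del map_init map1_goal (2 * n - 2).
End MAP.

From mathcomp Require Import all_boot zify.
Set Implicit Arguments.
Unset Strict Implicit.
Unset Printing Implicit Defensive.

(* MAP_n^1 hides the pigeonhole principle: the n goal nodes L_i^1 are the
   pigeons and the n-1 round trips out of L^0 that fit into 2n-2 steps are
   the holes.  An injection g of holes into pigeons gives a walk visiting all
   goal nodes but one; reading off its actions, and declaring the missing goal
   node visited after some trip h, gives a "critical" assignment.  It falsifies
   only clauses with a negative literal on the missing pigeon (at most two
   pigeons per clause), and moving the missing pigeon into a hole changes only
   variables that are then determined by that hole.  This is all the
   Beame-Pitassi argument for the pigeonhole principle needs: a greedy
   restriction by n/2 pigeon-hole pairs kills a 1/36 fraction of the wide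
   clauses of a refutation at each step, while a refutation under the
   restriction still has a wide clause (its first clause with a third of the
   free pigeons critical).  Hence 36^(n/2) <= 35^(n/2) * size, and 2^n is
   polynomial in the size. *)

Lemma card_set_sum (T : finType) (A : {set T}) (Q : pred T) :
  #|[set y in A | Q y]| = \sum_(y in A) Q y.
Proof.
rewrite -sum1_card [LHS]big_mkcond [RHS]big_mkcond /=.
by apply: eq_bigr => y _; rewrite !inE; case: (y \in A); case: (Q y).
Qed.

Section Satisfaction.
Variable V : finType.
Implicit Types (al : V -> bool) (C D E : clause V).

Definition sat al C : bool := [exists l in C, al l.1 == l.2].

Lemma sat_set0 al : sat al set0 = false.
Proof. by apply/existsP=> [[l]]; rewrite inE. Qed.

Lemma resolvent_unsat al C D E :
  resolvent C D E -> ~~ sat al E -> ~~ sat al C || ~~ sat al D.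
Proof.
case/existsP=> v /and3P[vC vD /eqP->]; rewrite -negb_and; apply: contra.
case/andP=> /existsP[l /andP[lC /eqP alC]] /existsP[l' /andP[lD /eqP alD]].
apply/existsP; case av: (al v).
- exists l'; rewrite alD eqxx andbT in_setU !in_setD1 lD andbT orbC.
  by apply/orP; left; apply/eqP => e; move: alD; rewrite e av.
- exists l; rewrite alC eqxx andbT in_setU !in_setD1 lC andbT.
  by apply/orP; left; apply/eqP => e; move: alC; rewrite e av.
Qed.

End Satisfaction.

Section CriticalAssignments.
Variables (V : finType) (K : nat).
Local Notation pigeon := 'I_K.+1.
Local Notation hole := 'I_K.
Local Notation cfg := {ffun hole -> pigeon}.
Implicit Types (g : cfg) (h j : hole) (p q : pigeon) (M : {set pigeon * hole}).

Definition reassign g j p : cfg := [ffun x => if x == j then p else g x].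

Lemma reassign_inj g j p : injective g -> p \notin codom g -> injective (reassign g j p).
Proof.
move=> ig pg x y; rewrite !ffunE.
case: (x =P j) => [->|_]; case: (y =P j) => [->|_] // e.
- by move: pg; rewrite e codom_f.
- by move: pg; rewrite -e codom_f.
- exact: ig.
Qed.

Lemma reassign_missing g j p : injective g -> p \notin codom g ->
  g j \notin codom (reassign g j p).
Proof.
move=> ig pg; apply/codomP=> [[x]]; rewrite ffunE; case: (x =P j) => [_ e|xj e].
- by move: pg; rewrite -e codom_f.
- by apply: xj; apply: ig.
Qed.

Lemma codom_missing g p q : injective g -> p \notin codom g -> q != p -> q \in codom g.
Proof.
move=> ig pg qp; apply: contraT => qg.
have cardC : #|~: [set x in codom g]| = 1.
  by have := cardsC [set x in codom g]; rewrite cardsE card_codom // !card_ord; lia.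
have : [set p; q] \subset ~: [set x in codom g].
  by apply/subsetP=> x; rewrite !inE => /orP[]/eqP->; rewrite ?pg ?qg.
by move/subset_leq_card; rewrite cards2 eq_sym qp cardC.
Qed.

(* [A g h] is the critical assignment of the injection [g] of the K holes
   into the K+1 pigeons and of an extra hole [h].  An axiom falsified by a
   critical assignment pins the missing pigeon down to two candidates, and
   moving the missing pigeon [p] into hole [j] only changes variables whose
   new value is already determined by "[j] holds [p]". *)
Variable A : cfg -> hole -> V -> bool.
Variable Phi : {set clause V}.

Hypothesis axiom_local : forall C, C \in Phi -> exists O : {set pigeon}, #|O| <= 2 /\
  forall g h p, injective g -> p \notin codom g -> ~~ sat (A g h) C -> p \in O.

Hypothesis reassign_local : forall g h j p, injective g -> p \notin codom g ->
  forall v, A g h v != A (reassign g j p) j v ->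
  forall g2 h2, injective g2 -> g2 j = p -> A g2 h2 v = A (reassign g j p) j v.

Definition matching M := [forall x in M, forall y in M, (x.1 == y.1) == (x.2 == y.2)].
Definition extends M g := [forall x in M, g x.2 == x.1].
Definition free_pigeons M := ~: [set x.1 | x in M].
Definition free_holes M := ~: [set x.2 | x in M].
Definition free_pairs M := setX (free_pigeons M) (free_holes M).

Lemma matchingP M : matching M -> {in M &, forall x y, (x.1 == y.1) = (x.2 == y.2)}.
Proof.
by move=> /forallP mM x y xM yM; move/implyP/(_ xM)/forallP/(_ y): (mM x); rewrite yM => /eqP.
Qed.

Lemma card_free_pigeons M : matching M -> #|free_pigeons M| = K.+1 - #|M|.
Proof.
move=> mM; have inj : {in M &, injective (fun x : pigeon * hole => x.1)}.
  move=> [p j] [p' j'] xM yM /= e; move: (matchingP mM xM yM); rewrite /= e eqxx.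
  by move/esym/eqP->.
by rewrite /free_pigeons cardsCs setCK card_ord card_in_imset.
Qed.

Lemma card_free_holes M : matching M -> #|free_holes M| = K - #|M|.
Proof.
move=> mM; have inj : {in M &, injective (fun x : pigeon * hole => x.2)}.
  move=> [p j] [p' j'] xM yM /= e; move: (matchingP mM xM yM); rewrite /= e eqxx.
  by move/eqP->.
by rewrite /free_holes cardsCs setCK card_ord card_in_imset.
Qed.

Lemma free_pigeons_setU1 x M : free_pigeons (x |: M) = free_pigeons M :\ x.1.
Proof. by rewrite /free_pigeons imsetU1 setCU setIC -setDE. Qed.

Lemma free_holes_setU1 x M : free_holes (x |: M) = free_holes M :\ x.2.
Proof. by rewrite /free_holes imsetU1 setCU setIC -setDE. Qed.

Lemma matching_setU1 x M : matching M -> x.1 \in free_pigeons M -> x.2 \in free_holes M ->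
  matching (x |: M).
Proof.
move=> mM; rewrite !inE => /negP x1 /negP x2.
have fresh y : y \in M -> (x.1 == y.1) = false /\ (x.2 == y.2) = false.
  by move=> yM; split; apply: negbTE; apply/eqP => e; [apply: x1 | apply: x2];
    rewrite e imset_f.
apply/forallP=> y; apply/implyP; rewrite in_setU1 => /orP[/eqP->|yM];
  apply/forallP=> z; apply/implyP; rewrite in_setU1 => /orP[/eqP->|zM];
  rewrite ?eqxx //.
- by have [-> ->] := fresh z zM.
- by rewrite [y.1 == _]eq_sym [y.2 == _]eq_sym; have [-> ->] := fresh y yM.
- by rewrite (matchingP mM yM zM).
Qed.

Lemma extends_sub M M' g : M \subset M' -> extends M' g -> extends M g.
Proof.
move=> sM /forallP eg; apply/forallP=> x; apply/implyP=> xM.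
by move/implyP: (eg x); apply; apply: (subsetP sM).
Qed.

Lemma reassign_extends M g j p : j \in free_holes M -> extends M g ->
  extends M (reassign g j p).
Proof.
move=> jU /forallP eg; apply/forallP=> x; apply/implyP=> xM; rewrite ffunE.
case: (x.2 =P j) => [e|_]; last by move/implyP: (eg x); apply.
by move: jU; rewrite inE -e imset_f.
Qed.

Lemma extension_of_perfect M p : matching M -> free_holes M = set0 ->
  p \in free_pigeons M -> exists g, [/\ injective g, extends M g & p \notin codom g].
Proof.
move=> mM noU pU.
have matched j : exists q, (q, j) \in M.
  have : j \notin free_holes M by rewrite noU inE.
  by rewrite inE negbK => /imsetP[[q j'] xM /= ->]; exists q.
pose g : cfg := [ffun j => odflt p [pick q | (q, j) \in M]].
have gM j : (g j, j) \in M.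
  rewrite ffunE; case: pickP => [q //|none]; case: (matched j) => q qM.
  by move: (none q); rewrite qM.
exists g; split.
- by move=> j j' e; apply/eqP; rewrite -(matchingP mM (gM j) (gM j')) /= e.
- apply/forallP=> x; apply/implyP=> xM.
  by rewrite (matchingP mM (gM x.2) xM) /=.
- apply/codomP=> [[j e]]; move: pU; rewrite inE e.
  by rewrite (imset_f (fun x : pigeon * hole => x.1) (gM j)).
Qed.

Lemma exists_extension M p : matching M -> p \in free_pigeons M ->
  exists g, [/\ injective g, extends M g & p \notin codom g].
Proof.
move nU : #|free_holes M| => n; elim: n M nU => [|n IH] M nU mM pU.
  exact: extension_of_perfect mM (cards0_eq nU) pU.
have [j jU] : exists j, j \in free_holes M by apply/card_gt0P; rewrite nU.
have [q qU qp] : exists2 q, q \in free_pigeons M & q != p.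
  have : 0 < #|free_pigeons M :\ p|.
    have := cardsD1 p (free_pigeons M); rewrite pU card_free_pigeons //.
    by move: nU; rewrite card_free_holes //; lia.
  by case/card_gt0P=> q; rewrite in_setD1 => /andP[qp qU]; exists q.
have [||g [ig eg pg]] := IH ((q, j) |: M) _ (@matching_setU1 (q, j) M mM qU jU).
- by rewrite free_holes_setU1 /=; have := cardsD1 j (free_holes M); rewrite jU nU add1n => -[->].
- by rewrite free_pigeons_setU1 in_setD1 pU andbT eq_sym.
by exists g; split=> //; apply: extends_sub eg; apply: subsetUr.
Qed.

Implicit Types (C D E : clause V) (pi : seq (clause V)).

Definition falsified_by M C g h p :=
  [&& injectiveb g, extends M g, p \notin codom g & ~~ sat (A g h) C].
Definition critical M C := [set p | [exists g : cfg, exists h : hole, falsified_by M C g h p]].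
Definition killers C := [set x : pigeon * hole | [forall g : cfg, forall h : hole,
  (injectiveb g && (g x.2 == x.1)) ==> sat (A g h) C]].
Definition forced M C := [forall g : cfg, forall h : hole,
  (injectiveb g && extends M g) ==> sat (A g h) C].

Lemma critical_sub_free M C : critical M C \subset free_pigeons M.
Proof.
apply/subsetP=> p; rewrite inE => /existsP[g /existsP[h /and4P[_ /forallP eg pg _]]].
rewrite inE; apply: contra pg => /imsetP[x xM ->].
by move/implyP/(_ xM)/eqP: (eg x) => <-; apply: codom_f.
Qed.

Lemma critical_not_forced M C p : p \in critical M C -> ~~ forced M C.
Proof.
rewrite inE => /existsP[g /existsP[h /and4P[ig eg _ ns]]].
by apply/forallP=> /(_ g)/forallP/(_ h); rewrite ig eg (negbTE ns).
Qed.

Lemma card_critical_axiom M C : C \in Phi -> #|critical M C| <= 2.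
Proof.
case/axiom_local=> O [cardO HO]; apply: leq_trans cardO; apply: subset_leq_card.
apply/subsetP=> p; rewrite inE => /existsP[g /existsP[h /and4P[/injectiveP ig _ pg ns]]].
exact: HO ns.
Qed.

Lemma critical_resolvent M C D E : resolvent C D E ->
  critical M E \subset critical M C :|: critical M D.
Proof.
move=> rE; apply/subsetP=> p; rewrite inE => /existsP[g /existsP[h /and4P[ig eg pg ns]]].
by rewrite !inE; case/orP: (resolvent_unsat rE ns) => nC; apply/orP; [left | right];
  apply/existsP; exists g; apply/existsP; exists h; rewrite /falsified_by ig eg pg nC.
Qed.

Lemma critical_set0 M : 0 < K -> matching M -> critical M set0 = free_pigeons M.
Proof.
move=> K0 mM; apply/eqP; rewrite eqEsubset critical_sub_free; apply/subsetP=> p pU.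
have [g [ig eg pg]] := exists_extension mM pU.
rewrite inE; apply/existsP; exists g; apply/existsP; exists (Ordinal K0).
by rewrite /falsified_by eg pg sat_set0 !andbT; apply/injectiveP.
Qed.

(* Moving the critical pigeon i into the hole j of a non-critical pigeon
   yields a satisfying assignment, and the literal satisfying it only
   depends on [j] holding [i]. *)
Lemma reassign_kills M C g h i j : falsified_by M C g h i ->
  g j \in free_pigeons M :\: critical M C -> (i, j) \in killers C :&: free_pairs M.
Proof.
move=> fals; have iS : i \in critical M C.
  by rewrite inE; apply/existsP; exists g; apply/existsP; exists h.
case/and4P: fals => /injectiveP ig eg ig' ns; rewrite inE => /andP[qS qU].
have jU : j \in free_holes M.
  rewrite inE; apply/imsetP=> [[x xM ej]].
  move/forallP/(_ x): eg; rewrite xM -ej /= => /eqP gj.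
  by move: qU; rewrite inE gj imset_f.
rewrite in_setI in_setX (subsetP (critical_sub_free M C) _ iS) jU !andbT inE.
have sat_reassign : sat (A (reassign g j i) j) C.
  apply: contraT => ns'; case/negP: qS; rewrite inE; apply/existsP; exists (reassign g j i).
  apply/existsP; exists j; rewrite /falsified_by reassign_extends // reassign_missing //= ns'.
  by rewrite andbT; apply/injectiveP/reassign_inj.
apply/forallP=> g2; apply/forallP=> h2; apply/implyP=> /andP[/injectiveP ig2 /eqP g2j].
case/existsP: sat_reassign => l /andP[lC /eqP Al]; apply/existsP; exists l.
have changed : A g h l.1 != A (reassign g j i) j l.1.
  by apply: contra ns => /eqP e; apply/existsP; exists l; rewrite lC e Al eqxx.
by rewrite lC (reassign_local ig ig' changed h2 ig2 g2j) Al eqxx.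
Qed.

Lemma card_critical_killers M C : 0 < K ->
  #|critical M C| * #|free_pigeons M :\: critical M C| <= #|killers C :&: free_pairs M|.
Proof.
move=> K0; pose h0 : hole := Ordinal K0.
set S := critical M C; set X := free_pigeons M :\: S.
pose wit i := odflt ([ffun=> i], h0) [pick gh : cfg * hole | falsified_by M C gh.1 gh.2 i].
have witP i : i \in S -> falsified_by M C (wit i).1 (wit i).2 i.
  rewrite inE => /existsP[g /existsP[h F]]; rewrite /wit.
  by case: pickP => [gh //|/(_ (g, h))]; rewrite F.
have codom_wit i q : i \in S -> q \in X -> q \in codom (wit i).1.
  move=> iS qX; case/and4P: (witP i iS) => /injectiveP ig _ ig' _.
  by apply: codom_missing ig ig' _; apply: contraTneq qX => ->; rewrite inE iS.
pose hole_of g q : hole := odflt h0 [pick j | g j == q].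
have hole_ofP g q : q \in codom g -> g (hole_of g q) = q.
  case/codomP=> j ->; rewrite /hole_of.
  by case: pickP => [j' /eqP //|/(_ j)]; rewrite eqxx.
pose F (iq : pigeon * pigeon) := (iq.1, hole_of (wit iq.1).1 iq.2).
have Finj : {in setX S X &, injective F}.
  move=> [i q] [i' q']; rewrite !in_setX /= => /andP[iS qX] /andP[_ q'X] [ei e].
  subst i'.
  by rewrite -(hole_ofP _ q (codom_wit _ _ iS qX)) e hole_ofP // codom_wit.
rewrite -cardsX -(card_in_imset Finj); apply/subset_leq_card/subsetP=> y /imsetP[[i q]].
rewrite in_setX => /andP[iS qX] ->; apply: reassign_kills (witP i iS) _.
by rewrite /= hole_ofP // codom_wit.
Qed.

(* The first clause of [pi] with a third of the free pigeons critical: axioms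
   have at most two critical pigeons and critical sets are subadditive under
   resolution, so it has at most two thirds of them. *)
Lemma balanced_clause M pi : matching M -> 7 <= #|free_pigeons M| -> refutation Phi pi ->
  exists2 C, C \in pi & #|free_pigeons M| <= 3 * #|critical M C| <= 2 * #|free_pigeons M|.
Proof.
move=> mM m7 /and3P[pi0 /eqP lastE /forallP derived].
have K0 : 0 < K by move: m7; rewrite card_free_pigeons //; lia.
set m := #|free_pigeons M| in m7 *.
pose big i := (i < size pi) && (m <= 3 * #|critical M (nth set0 pi i)|).
have exbig : exists i, big i.
  exists (size pi).-1.
  by rewrite /big nth_last lastE critical_set0 // ltn_predL lt0n size_eq0 pi0 leq_pmull.
case: (ex_minnP exbig) => i0 /andP[i0pi big_i0] minimal.
exists (nth set0 pi i0); first exact: mem_nth.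
rewrite big_i0 /=.
have small (x : 'I_i0) : 3 * #|critical M (nth set0 pi x)| < m.
  rewrite ltnNge; apply: contraL (ltn_ord x) => bigx; rewrite -leqNgt minimal //.
  by rewrite /big bigx (ltn_trans (ltn_ord x) i0pi).
case/orP: (derived (Ordinal i0pi)) => /= [axiom | /existsP[j /existsP[k res]]].
  by have := card_critical_axiom M axiom; lia.
have le := leq_trans (subset_leq_card (critical_resolvent M res)) (leq_card_setU _ _).1.
apply: leq_trans (leq_mul (leqnn 3) le) _; rewrite mulnDr mul2n -addnn.
by apply: leq_add; apply: ltnW; apply: small.
Qed.

Lemma bottleneck M pi : matching M -> 7 <= #|free_pigeons M| -> refutation Phi pi ->
  exists2 C, C \in pi &
    ~~ forced M C && (#|free_pigeons M| ^ 2 <= 9 * #|killers C :&: free_pairs M|).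
Proof.
move=> mM m7 ref; have K0 : 0 < K by move: m7; rewrite card_free_pigeons //; lia.
have [C Cpi /andP[lo hi]] := balanced_clause mM m7 ref.
exists C => //; apply/andP; split.
  have /card_gt0P[p pS] : 0 < #|critical M C| by lia.
  exact: critical_not_forced pS.
have := card_critical_killers M C K0.
rewrite cardsD (setIidPr (critical_sub_free M C)).
have := subset_leq_card (critical_sub_free M C).
move: #|critical M C| #|free_pigeons M| #|killers C :&: free_pairs M| lo hi => s m k lo hi sm sk.
have : m * m <= (3 * s) * (3 * (m - s)) by apply: leq_mul; lia.
by move: sk; rewrite -mulnn; nia.
Qed.

Definition wide pi mr M := [set C | [&& C \in pi, ~~ forced M C &
  mr ^ 2 <= 9 * #|killers C :&: free_pairs M|]].

(* Every wide clause has at least mr^2/9 >= #|free_pairs M|/36 killers among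
   the free pairs, so by averaging some free pair kills 1/36 of them. *)
Lemma popular_killer pi mr M : matching M -> #|M| < K -> K.+1 ^ 2 <= 4 * mr ^ 2 ->
  exists2 x, x \in free_pairs M &
    #|wide pi mr M| <= 36 * #|[set C in wide pi mr M | x \in killers C]|.
Proof.
move=> mM MK Kmr; set W := wide pi mr M.
pose hits x := #|[set C in W | x \in killers C]|.
have cardU : #|free_pairs M| = (K.+1 - #|M|) * (K - #|M|).
  by rewrite cardsX card_free_pigeons // card_free_holes.
have double_count : \sum_(x in free_pairs M) hits x
                    = \sum_(C in W) #|killers C :&: free_pairs M|.
  rewrite /hits; under eq_bigr do rewrite card_set_sum.
  rewrite exchange_big; apply: eq_bigr => C _; rewrite -card_set_sum.
  by apply: eq_card => x; rewrite !inE andbC.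
have lower : #|W| * mr ^ 2 <= 9 * \sum_(C in W) #|killers C :&: free_pairs M|.
  by rewrite -sum_nat_const big_distrr; apply: leq_sum => C; rewrite inE => /and3P[].
apply/exists_inP; apply: contraT; rewrite negb_exists_in => /forall_inP few.
have : \sum_(x in free_pairs M) (36 * hits x + 1) <= \sum_(x in free_pairs M) #|W|.
  by apply: leq_sum => x /few; rewrite -ltnNge addn1.
rewrite big_split -big_distrr /= double_count !sum_nat_const cardU.
move: lower; move: (\sum_(C in W) _) #|W| => S w.
have : 0 < (K.+1 - #|M|) * (K - #|M|) by rewrite muln_gt0; apply/andP; split; lia.
have : (K.+1 - #|M|) * (K - #|M|) <= K.+1 ^ 2 by rewrite -mulnn; apply: leq_mul; lia.
move: ((K.+1 - #|M|) * (K - #|M|)) => u; nia.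
Qed.

Lemma forced_sub M M' C : M \subset M' -> forced M C -> forced M' C.
Proof.
move=> sM /forallP fM; apply/forallP=> g; apply/forallP=> h; apply/implyP=> /andP[ig eg].
by move/forallP/(_ h)/implyP: (fM g); apply; rewrite ig (extends_sub sM eg).
Qed.

Lemma killer_forced x M C : x \in killers C -> forced (x |: M) C.
Proof.
rewrite inE => /forallP xK; apply/forallP=> g; apply/forallP=> h; apply/implyP=> /andP[ig eg].
move/forallP/(_ h)/implyP: (xK g); apply; rewrite ig.
by move/forallP/(_ x)/implyP: eg; apply; rewrite setU11.
Qed.

Lemma greedy_step pi mr M : matching M -> #|M| < K -> K.+1 ^ 2 <= 4 * mr ^ 2 ->
  exists M', [/\ matching M', #|M'| = #|M|.+1 &
                 36 * #|wide pi mr M'| <= 35 * #|wide pi mr M|].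
Proof.
move=> mM MK Kmr; have [[p j] xU popular] := popular_killer pi mM MK Kmr.
move: (xU); rewrite in_setX => /andP[pU jU].
have xM : (p, j) \notin M by apply: contraL pU => xM; rewrite inE negbK (imset_f _ xM).
exists ((p, j) |: M); split; [exact: matching_setU1 | by rewrite cardsU1 xM |].
set W := wide pi mr M in popular *.
set Hit := [set C in W | (p, j) \in killers C] in popular *.
have HitW : Hit \subset W by apply/subsetP=> C; rewrite inE => /andP[].
have : wide pi mr ((p, j) |: M) \subset W :\: Hit.
  apply/subsetP=> C; rewrite inE => /and3P[Cpi not_forced wideC].
  have CW : C \in W.
    rewrite inE Cpi (contra (@forced_sub _ _ C (subsetUr _ _)) not_forced) /=.
    apply: leq_trans wideC _; rewrite leq_mul2l; apply/orP; right.
    apply/subset_leq_card/setIS; rewrite /free_pairs free_pigeons_setU1 free_holes_setU1.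
    by apply: setXS; apply: subD1set.
  by rewrite in_setD CW inE CW (contra (@killer_forced _ M C) not_forced).
move/subset_leq_card; rewrite cardsD (setIidPr HitW).
by have := subset_leq_card HitW; move: popular; clearbody W Hit; lia.
Qed.

Lemma greedy pi mr s : K.+1 ^ 2 <= 4 * mr ^ 2 -> s <= K ->
  exists M, [/\ matching M, #|M| = s & 36 ^ s * #|wide pi mr M| <= 35 ^ s * size pi].
Proof.
move=> Kmr; elim: s => [|s IH] sK.
  exists set0; split; first by apply/forallP=> x; rewrite inE.
    by rewrite cards0.
  rewrite !expn0 !mul1n; apply: leq_trans (card_size pi).
  by apply/subset_leq_card/subsetP=> C; rewrite inE => /and3P[].
have [M [mM cardM le]] := IH (ltnW sK).
have [|M' [mM' cardM' le']] := greedy_step pi mM _ Kmr; first by rewrite cardM.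
exists M'; split=> //; first by rewrite cardM' cardM.
rewrite !expnS; move: le le'; move: (36 ^ s) (35 ^ s) #|wide pi mr M| #|wide pi mr M'|.
by move=> a b w w' le le'; nia.
Qed.

Theorem refutation_size_critical pi : 13 <= K.+1 -> refutation Phi pi ->
  36 ^ (K.+1)./2 <= 35 ^ (K.+1)./2 * size pi.
Proof.
move=> K13 ref; set r := (K.+1)./2; set mr := K.+1 - r.
have Kmr : K.+1 ^ 2 <= 4 * mr ^ 2.
  by rewrite -[4]/(2 ^ 2) -expnMn leq_sqr /mr /r; lia.
have [|M [mM cardM le]] := greedy pi Kmr (_ : r <= K); first by rewrite /r; lia.
have freeM : #|free_pigeons M| = mr by rewrite card_free_pigeons // cardM.
have [|C Cpi /andP[not_forced wideC]] := bottleneck mM (_ : 7 <= #|free_pigeons M|) ref.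
  by rewrite freeM /mr /r; lia.
have : 0 < #|wide pi mr M| by apply/card_gt0P; exists C; rewrite inE Cpi not_forced -freeM.
by move: le; move: (36 ^ r) (35 ^ r) #|wide pi mr M| => a b w; nia.
Qed.

End CriticalAssignments.

Section PlanningGraphSoundness.
Variables (F B : finType) (pre add del : B -> {set F}).
Implicit Types (s : {set F}) (b : B) (a : B + F) (L : layerT F).

Definition state_in L s :=
  (s \subset L.1) && [forall p in s, forall q in s, (p, q) \notin L.2].

Definition step_actions s b : {set B + F} :=
  inl b |: [set inr p | p in s :\: del b].

Lemma state_in_init init : state_in (init, set0) init.
Proof.
by rewrite /state_in subxx; apply/forall_inP=> p _; apply/forall_inP=> q _; rewrite inE.
Qed.

Lemma step_actions_pre s b a : pre b \subset s -> a \in step_actions s b -> preX pre a \subset s.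
Proof.
move=> pb; rewrite in_setU1 => /orP[/eqP-> //|/imsetP[p]].
by rewrite in_setD => /andP[_ ps] ->; rewrite sub1set.
Qed.

Lemma step_actions_present L s b a : state_in L s -> pre b \subset s ->
  a \in step_actions s b -> a \in actions_at pre L.
Proof.
move=> /andP[sL /forall_inP nomutex] pb aA; have pa := step_actions_pre pb aA.
rewrite inE (subset_trans pa sL); apply/forall_inP=> p pP; apply/forall_inP=> q qP.
by move/forall_inP: (nomutex p (subsetP pa _ pP)); apply; apply: (subsetP pa).
Qed.

Lemma step_actions_not_interfere s b a a' : a \in step_actions s b ->
  a' \in step_actions s b -> a != a' -> ~~ interferes pre add del a a'.
Proof.
rewrite !in_setU1 => /orP[/eqP->|/imsetP[p _ ->]] /orP[/eqP->|/imsetP[q qS ->]];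
  rewrite ?eqxx // => _; apply/existsP=> -[z]; rewrite !inE //= => /andP[zd /orP[]/eqP zq];
  by move: qS; rewrite in_setD -zq zd.
Qed.

Lemma step_actions_nonmutex L s b a a' : state_in L s -> pre b \subset s ->
  a \in step_actions s b -> a' \in step_actions s b -> ~~ amutex pre add del L a a'.
Proof.
move=> /andP[_ /forall_inP nomutex] pb aA aA'.
rewrite /amutex; have [->|ne] := eqVneq a a' => //=.
rewrite (negbTE (step_actions_not_interfere aA aA' ne)).
rewrite (negbTE (step_actions_not_interfere aA' aA _)) 1?eq_sym //=.
apply/exists_inP=> -[p pP /exists_inP[q qP pq]].
move/forall_inP: (nomutex p (subsetP (step_actions_pre pb aA) _ pP)) => /(_ q).
by rewrite (subsetP (step_actions_pre pb aA') _ qP) pq => /(_ isT).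
Qed.

Lemma step_actions_add s b p : p \in (s :\: del b) :|: add b ->
  exists2 a, a \in step_actions s b & p \in addX add a.
Proof.
rewrite in_setU => /orP[pS|pa]; last by exists (inl b); rewrite ?setU11.
by exists (inr p); rewrite /= ?inE // imset_f ?orbT.
Qed.

Lemma state_in_next L s b : state_in L s -> pre b \subset s ->
  state_in (next_layer pre add del L) ((s :\: del b) :|: add b).
Proof.
move=> sL pb; apply/andP; split.
  apply/subsetP=> p /step_actions_add [a aA pa].
  by apply/bigcupP; exists a => //; apply: step_actions_present aA.
apply/forall_inP=> p /step_actions_add [a aA pa].
apply/forall_inP=> q /step_actions_add [a' aA' qa'].
rewrite inE; apply/negP=> /and4P[_ _ _ /forall_inP/(_ a (step_actions_present sL pb aA))].
move/forall_inP/(_ a' (step_actions_present sL pb aA')); rewrite pa qa' /= => mut.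
by move: (step_actions_nonmutex sL pb aA aA'); rewrite mut.
Qed.

End PlanningGraphSoundness.

Section MapCriticalAssignments.
Variable k : nat.
Local Notation n := k.+2.
Local Notation T := (2 * n - 2).
Local Notation nd := (node n).
Local Notation V := (pvar (fact n) (move n) T).
Local Notation cfg := {ffun 'I_k.+1 -> 'I_k.+2}.
Local Notation FL := (fact_layer (@move_pre n) (@move_add n) (@move_del n) (map_init n)).
Local Notation AL := (act_layer (@move_pre n) (@move_add n) (@move_del n) (map_init n)).
Local Notation GOAL :=
  (goal_clauses (@move_pre n) (@move_add n) (@move_del n) (map_init n) (map1_goal n) T).
Local Notation PRE := (pre_clauses (@move_pre n) (@move_add n) (@move_del n) (map_init n) T).
Local Notation MUTEX :=
  (mutex_clauses (@move_pre n) (@move_add n) (@move_del n) (map_init n) T).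
Implicit Types (g : cfg) (h j : 'I_k.+1) (p q : 'I_k.+2) (t : nat).

Lemma first_branch_lt : 0 < 2 * n - 3. Proof. lia. Qed.
Lemma other_branch_lt p : p.-1 < n - 1. Proof. have := ltn_ord p; lia. Qed.

(* Pigeon 0 is L_1^1 and pigeon i > 0 is L_(i+1)^1; hole j is the j-th round
   trip out of L^0, made at the time steps 2j+1 and 2j+2. *)
Definition goal_node p : nd :=
  if (p : nat) == 0 then Some (inl (Ordinal first_branch_lt))
  else Some (inr (Ordinal (other_branch_lt p))).

Lemma goal_node_inj : injective goal_node.
Proof.
move=> p q; rewrite /goal_node; case: ((p : nat) =P 0) => p0; case: ((q : nat) =P 0) => q0 //.
- by move=> _; apply: ord_inj; rewrite p0 q0.
- by move=> [] e; apply: ord_inj; lia.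
Qed.

Lemma level1_goal_node x : level1 x -> exists p, x = goal_node p.
Proof.
case: x => [[y|y]|] //= h.
- exists ord0; rewrite /goal_node /=; congr (Some (inl _)); apply: val_inj; exact/eqP.
- have lt : y.+1 < n by have := ltn_ord y; lia.
  by exists (Ordinal lt); rewrite /goal_node /=; congr (Some (inr _)); apply: val_inj.
Qed.

Definition trip t : 'I_k.+1 := inord (t.-1)./2.
Definition trip_move q t : nd * nd := if odd t then (None, goal_node q) else (goal_node q, None).
Definition walk_move g t := trip_move (g (trip t)) t.

Lemma trip_odd j : trip (2 * j + 1) = j.
Proof. by apply: ord_inj; rewrite /trip addn1 /= mul2n half_double inordK. Qed.

Lemma adj_trip_move q t : adj (trip_move q t).1 (trip_move q t).2.
Proof. by rewrite /trip_move /adj /goal_node; case: (odd t); case: ((q : nat) == 0). Qed.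

Definition move_at g t : move n :=
  insubd (exist _ (trip_move ord0 1) (adj_trip_move ord0 1)) (walk_move g t).

Lemma move_atE g t : val (move_at g t) = walk_move g t.
Proof. by rewrite /move_at insubdK //; apply: adj_trip_move. Qed.

Fixpoint walk_state g t : {set fact n} :=
  if t is t'.+1 then (walk_state g t' :\: move_del (move_at g t)) :|: move_add (move_at g t)
  else map_init n.

Definition position g t : nd := if t == 0 then None else (walk_move g t).2.

Lemma walk_move_fst g t : (walk_move g t.+1).1 = position g t.
Proof.
rewrite /position /walk_move /trip_move; case: t => [|t] //=.
case/boolP: (odd t) => ot; rewrite /= ?ot //=.
by congr (goal_node (g (inord _))); have := odd_double_half t; rewrite (negbTE ot); lia.
Qed.

Lemma walk_state_at g t : at_ (position g t) \in walk_state g t.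
Proof.
case: t => [|t]; first by rewrite /= /map_init inE.
by rewrite /= in_setU /move_add move_atE !inE eqxx orbT.
Qed.

Lemma pre_move_at g t : 0 < t -> move_pre (move_at g t) \subset walk_state g t.-1.
Proof. by case: t => // t _; rewrite /move_pre move_atE walk_move_fst sub1set walk_state_at. Qed.

Lemma walk_state_in g t : state_in (FL t) (walk_state g t).
Proof.
elim: t => [|t IH]; first exact: state_in_init.
exact: (state_in_next (@move_add n) (@move_del n) IH (pre_move_at g (ltn0Sn t))).
Qed.

Lemma walk_state_visited g j t : 2 * j + 1 <= t -> visited (goal_node (g j)) \in walk_state g t.
Proof.
elim: t => [|t IH]; first by lia.
rewrite leq_eqVlt => /orP[/eqP e|lt].
- rewrite /= in_setU /move_add move_atE /walk_move -e trip_odd /trip_move.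
  by rewrite oddD oddM /= !inE eqxx !orbT.
- by rewrite /= in_setU in_setD (IH lt) /move_del !inE /at_ /visited !xpair_eqE !andbF.
Qed.

Definition moves_at g t (xy : nd * nd) := [&& 0 < t, t <= T & xy == walk_move g t].
Definition visited_by g (x : nd) t := [exists j, (x == goal_node (g j)) && (2 * j + 2 <= t)].

(* The walk of [g] is a plan of length T visiting every goal node except the
   missing pigeon; its NOOPs keep exactly the visited facts. *)
Definition plan_act g t (a : move n + fact n) : bool :=
  match a with
  | inl m => moves_at g t (val m)
  | inr (x, b) => ~~ b && visited_by g x t
  end.
Definition plan_assignment g (v : V) : bool := plan_act g v.1 v.2.

Lemma plan_act_pos g t a : plan_act g t a -> 0 < t.
Proof.
case: a => [m|[x [|]]] //=; first by case/and3P.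
by case/existsP=> j /andP[_ jt]; lia.
Qed.

Lemma plan_act_step g t a : plan_act g t a ->
  a \in step_actions (@move_del n) (walk_state g t.-1) (move_at g t).
Proof.
case: a => [m|[x [|]]] //= => [/and3P[_ _ /eqP e] | /existsP[j /andP[/eqP -> jt]]].
  rewrite in_setU1; apply/orP; left; apply/eqP; congr inl; apply: val_inj.
  by rewrite move_atE -e.
rewrite in_setU1; apply/orP; right; apply: imset_f.
rewrite in_setD walk_state_visited; last by lia.
by rewrite /move_del !inE /visited /at_ xpair_eqE andbF.
Qed.

Lemma plan_act_layer g t a : plan_act g t a -> a \in AL t.
Proof.
move=> ga; have t0 := plan_act_pos ga.
exact: (step_actions_present (walk_state_in g t.-1) (pre_move_at g t0) (plan_act_step ga)).
Qed.

Lemma plan_act_nonmutex g t a b : plan_act g t a -> plan_act g t b ->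
  ~~ act_mutex (@move_pre n) (@move_add n) (@move_del n) (map_init n) t a b.
Proof.
move=> ga gb; have t0 := plan_act_pos ga.
exact: (step_actions_nonmutex (@move_add n) (walk_state_in g t.-1) (pre_move_at g t0)
          (plan_act_step ga) (plan_act_step gb)).
Qed.

Lemma plan_act_support g t a f : 1 < t -> t <= T -> plan_act g t a ->
  f \in preX (@move_pre n) a -> exists2 a', plan_act g t.-1 a' & f \in addX (@move_add n) a'.
Proof.
move=> t1 tT; have prev_move : plan_act g t.-1 (inl (move_at g t.-1)).
  by rewrite /= move_atE /moves_at eqxx andbT; apply/andP; split; lia.
case: a => [m|[x [|]]] //=.
  case/and3P=> _ _ /eqP e; rewrite /move_pre => /set1P ->.
  exists (inl (move_at g t.-1)) => //.
  move: e t1; case: t {tT prev_move} => [|[|t]] // e _.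
  rewrite -[\val m]/(sval m) e walk_move_fst /move_add /=.
  by rewrite move_atE /position !inE eqxx.
case/existsP=> j /andP[/eqP xe jt]; rewrite inE => /eqP ->.
have [lt|eq] : 2 * j + 2 < t \/ 2 * j + 2 = t by lia.
  exists (inr (x, false)); rewrite /= ?inE //.
  by apply/existsP; exists j; rewrite xe eqxx /=; lia.
exists (inl (move_at g t.-1)) => //.
have -> : t.-1 = 2 * j + 1 by lia.
by rewrite /move_add /= move_atE /walk_move trip_odd /trip_move oddD oddM xe !inE eqxx orbT.
Qed.

Lemma plan_sat_pre g C : C \in PRE -> sat (plan_assignment g) C.
Proof.
case/imsetP=> [[[t a] f]]; rewrite inE /= => /and3P[t1 aL fa] ->.
apply/existsP; case ga: (plan_act g t a); last first.
  by exists ((t, a), false); rewrite /plan_assignment /= ga in_setU set11.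
have [a' ga' fa'] := plan_act_support t1 (ltn_ord t : t <= T) ga fa.
exists ((inord t.-1, a'), true).
rewrite /plan_assignment /= inordK; last by have := ltn_ord t; lia.
rewrite ga' andbT in_setU; apply/orP; right; apply: imset_f.
by rewrite inE fa' andbT; apply: plan_act_layer ga'.
Qed.

Lemma plan_sat_mutex g C : C \in MUTEX -> sat (plan_assignment g) C.
Proof.
case/imsetP=> [[[t a] b]]; rewrite inE /= => /and4P[_ _ _ mut] ->.
apply/existsP; case ga: (plan_act g t a).
  case gb: (plan_act g t b); first by move: (plan_act_nonmutex ga gb); rewrite mut.
  by exists ((t, b), false); rewrite !inE eqxx orbT /plan_assignment /= gb.
by exists ((t, a), false); rewrite !inE eqxx /plan_assignment /= ga.
Qed.

(* The goal clause of the missing pigeon p is falsified, and it does contain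
   NOOP-visited-p at time T: that action is in the last layer because the
   walk of [reassign g ord0 p] visits p first. *)
Lemma plan_goal_clause g p C : injective g -> p \notin codom g -> C \in GOAL ->
  ~~ sat (plan_assignment g) C -> ((ord_max, inr (visited (goal_node p))), true) \in C.
Proof.
move=> ig pg /imsetP[f /imsetP[x /level1_goal_node[q ->] ->] ->] unsat.
have [->|qp] := eqVneq q p.
  apply: imset_f; rewrite inE set11 andbT.
  apply: (@plan_act_layer (reassign g ord0 p)); apply/existsP; exists ord0.
  by rewrite ffunE !eqxx /=; lia.
case/codomP: (codom_missing ig pg qp) => j qE; subst q.
have ga : plan_act g T (inr (visited (goal_node (g j)))).
  by apply/existsP; exists j; rewrite eqxx /=; have := ltn_ord j; lia.
case/negP: unsat; apply/existsP; exists ((ord_max, inr (visited (goal_node (g j)))), true).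
apply/andP; split; last by apply/eqP; exact: ga.
by apply: imset_f; rewrite inE (plan_act_layer ga) set11.
Qed.

Lemma plan_unsat_goal g p C : injective g -> p \notin codom g -> C \in MAP1_cnf n ->
  ~~ sat (plan_assignment g) C -> ((ord_max, inr (visited (goal_node p))), true) \in C.
Proof.
move=> ig pg; rewrite /MAP1_cnf /gp_cnf !in_setU => /orP[/orP[CG|CP]|CM] unsat.
- exact: plan_goal_clause CG unsat.
- by rewrite plan_sat_pre in unsat.
- by rewrite plan_sat_mutex in unsat.
Qed.

Definition trip_of g h q : nat := if [pick j | g j == q] is Some j then val j else val h.

Definition visited_or_missing g h (x : nd) t :=
  visited_by g x t || [exists p, [&& p \notin codom g, x == goal_node p & 2 * h + 2 <= t]].

(* As [plan_act], but the missing pigeon is also declared visited after trip h. *)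
Definition critical_act g h t (a : move n + fact n) : bool :=
  match a with
  | inl m => moves_at g t (val m)
  | inr (x, b) => ~~ b && visited_or_missing g h x t
  end.
Definition critical_assignment g h (v : V) : bool := critical_act g h v.1 v.2.

Lemma trip_of_codom g h j : injective g -> trip_of g h (g j) = j.
Proof.
move=> ig; rewrite /trip_of; case: pickP => [j' /eqP /ig -> //|/(_ j)].
by rewrite eqxx.
Qed.

Lemma trip_of_missing g h q : q \notin codom g -> trip_of g h q = h.
Proof.
move=> qg; rewrite /trip_of; case: pickP => [j /eqP e|//].
by move: qg; rewrite -e codom_f.
Qed.

Lemma visited_or_missing_goal g h q t : injective g ->
  visited_or_missing g h (goal_node q) t = (2 * trip_of g h q + 2 <= t).
Proof.
move=> ig; rewrite /visited_or_missing /visited_by.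
have [/codomP[j ->]|qg] := boolP (q \in codom g).
  rewrite trip_of_codom //; apply/idP/idP => [|jt].
    case/orP=> [/existsP[j' /andP[/eqP /goal_node_inj /ig -> //]]|].
    by case/existsP=> p' /and3P[pg /eqP /goal_node_inj e _]; move: pg; rewrite -e codom_f.
  by apply/orP; left; apply/existsP; exists j; rewrite eqxx.
rewrite trip_of_missing //; apply/idP/idP => [|ht].
  case/orP=> [/existsP[j' /andP[/eqP /goal_node_inj e _]]|/existsP[p' /and3P[_ _ //]]].
  by move: qg; rewrite e codom_f.
by apply/orP; right; apply/existsP; exists q; rewrite qg eqxx.
Qed.

Lemma visited_or_missing_other g h x t : (forall q, x != goal_node q) ->
  visited_or_missing g h x t = false.
Proof.
move=> other; apply/norP; split.
  by apply/existsP=> -[j /andP[/eqP e _]]; move/eqP: (other (g j)).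
by apply/existsP=> -[q /and3P[_ /eqP e _]]; move/eqP: (other q).
Qed.

Lemma critical_reassign_local g h j p : injective g -> p \notin codom g ->
  forall v, critical_assignment g h v != critical_assignment (reassign g j p) j v ->
  forall g2 h2, injective g2 -> g2 j = p ->
    critical_assignment g2 h2 v = critical_assignment (reassign g j p) j v.
Proof.
move=> ig pg [t a] changed g2 h2 ig2 g2j; move: changed; rewrite /critical_assignment /=.
have ig' := reassign_inj (j := j) ig pg.
case: a => [m|[x [|]]] //=.
  rewrite /moves_at /walk_move ffunE; have [->|_] := eqVneq (trip t) j.
    by rewrite g2j.
  by rewrite eqxx.
case: (pickP (fun q => x == goal_node q)) => [q /eqP ->|other]; last first.
  by rewrite !visited_or_missing_other // => q; rewrite other.
rewrite !visited_or_missing_goal //; have [->|qp] := eqVneq q p.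
  have e := trip_of_codom j j ig'; rewrite ffunE eqxx in e.
  by rewrite -[X in trip_of g2 h2 X]g2j trip_of_codom // e.
case/codomP: (codom_missing ig pg qp) => j0 ->.
have [->|j0j] := eqVneq j0 j.
  by rewrite trip_of_codom // trip_of_missing ?reassign_missing // eqxx.
have e := trip_of_codom j j0 ig'; rewrite ffunE (negbTE j0j) in e.
by rewrite trip_of_codom // e eqxx.
Qed.

Lemma card_negative_literals C : C \in MAP1_cnf n -> #|[set l in C | ~~ l.2]| <= 2.
Proof.
rewrite /MAP1_cnf /gp_cnf !in_setU => /orP[/orP[/imsetP[f _ ->]|/imsetP[x _ ->]]|/imsetP[x _ ->]].
- rewrite (_ : [set _ in _ | _] = set0) ?cards0 //; apply/setP=> l.
  by rewrite !inE; apply/andP=> -[/imsetP[a _ ->]].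
- apply: leq_trans (_ : #|[set ((x.1.1, x.1.2), false)]| <= 2); last by rewrite cards1.
  apply/subset_leq_card/subsetP=> l; rewrite !inE.
  by case/andP=> /orP[//|/imsetP[a _ ->]].
- apply: leq_trans (_ : #|[set ((x.1.1, x.1.2), false); ((x.1.1, x.2), false)]| <= 2).
    by apply/subset_leq_card/subsetP=> l; rewrite inE => /andP[].
  by rewrite cards2; case: (_ != _).
Qed.

Lemma plan_le_critical g h v : plan_assignment g v -> critical_assignment g h v.
Proof.
case: v => t [m|[x b]] //; rewrite /plan_assignment /critical_assignment /=.
by rewrite /visited_or_missing => /andP[-> ->].
Qed.

Lemma critical_extra g h p v : injective g -> p \notin codom g ->
  critical_assignment g h v -> ~~ plan_assignment g v -> v.2 = inr (visited (goal_node p)).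
Proof.
move=> ig pg; case: v => t [m|[x [|]]]; rewrite /critical_assignment /plan_assignment //=.
  by move=> ->.
rewrite /visited_or_missing => /orP[-> //|/existsP[q /and3P[qg /eqP -> _]]] _.
by have [->|/(codom_missing ig pg)] := eqVneq q p; last rewrite (negbTE qg).
Qed.

Definition literal_pigeon (l : lit V) : 'I_k.+2 :=
  if l.1.2 is inr (x, _) then odflt ord0 [pick q | goal_node q == x] else ord0.

(* A clause falsified by a critical assignment is falsified by the plan
   assignment too, unless it contains a negative NOOP-visited literal of
   the missing pigeon; the only other clauses the plan falsifies contain
   a positive literal that every critical assignment satisfies. *)
Lemma critical_axiom_local C : C \in MAP1_cnf n -> exists O : {set 'I_k.+2}, #|O| <= 2 /\
  forall g h p, injective g -> p \notin codom g -> ~~ sat (critical_assignment g h) C -> p \in O.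
Proof.
move=> CPhi.
exists [set p | [exists t : 'I_T.+1, ((t, inr (visited (goal_node p))), false) \in C]]; split.
  apply: leq_trans (card_negative_literals CPhi).
  apply: leq_trans (leq_imset_card literal_pigeon _).
  apply/subset_leq_card/subsetP=> p; rewrite inE => /existsP[t lC].
  apply/imsetP; exists ((t, inr (visited (goal_node p))), false); first by rewrite inE lC.
  rewrite /literal_pigeon /=; case: pickP => [q /eqP /goal_node_inj -> //|/(_ p)].
  by rewrite eqxx.
move=> g h p ig pg unsat; apply: contraT => pO.
have plan_unsat : ~~ sat (plan_assignment g) C.
  apply/existsP=> -[[v b] /andP[lC /eqP plan_b]].
  have [crit_b|] := eqVneq (critical_assignment g h v) b.
    by case/negP: unsat; apply/existsP; exists (v, b); rewrite lC crit_b eqxx.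
  case: b plan_b lC => [plan_v | /negbT plan_v] lC.
    by rewrite (plan_le_critical h plan_v).
  rewrite eqbF_neg negbK => crit_v.
  have ev := critical_extra ig pg crit_v plan_v.
  by case/negP: pO; rewrite inE; apply/existsP; exists v.1; rewrite -ev -surjective_pairing.
case/negP: unsat; apply/existsP; exists ((ord_max, inr (visited (goal_node p))), true).
rewrite (plan_unsat_goal ig pg CPhi plan_unsat) /critical_assignment /=.
by rewrite visited_or_missing_goal // trip_of_missing //; have := ltn_ord h; lia.
Qed.

Theorem map1_refutation_size pi : 13 <= n -> refutation (MAP1_cnf n) pi ->
  36 ^ n./2 <= 35 ^ n./2 * size pi.
Proof.
exact: refutation_size_critical critical_axiom_local critical_reassign_local pi.
Qed.

End MapCriticalAssignments.

Lemma bernoulli_expn a e : a ^ e * (a + e) <= a * (a + 1) ^ e.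
Proof.
elim: e => [|e IH]; first by rewrite !expn0 addn0 mul1n muln1.
rewrite !expnS; have := leq_mul (leqnn (a + 1)) IH.
by move: (a ^ e) ((a + 1) ^ e) => x y; nia.
Qed.

Lemma double_expn_le a : 0 < a -> 2 * a ^ a <= (a + 1) ^ a.
Proof.
move=> a0; have := bernoulli_expn a a; rewrite -(leq_pmul2l a0).
by move: (a ^ a) ((a + 1) ^ a) => x y; nia.
Qed.

Lemma expn_ratio_bound a r s : 0 < a -> (a + 1) ^ r <= a ^ r * s -> 2 ^ r <= s ^ a.
Proof.
move=> a0 le; have [r0|r0] := posnP r.
  by move: le; rewrite r0 !expn0 mul1n expn_gt0 => ->.
have ar0 : 0 < a ^ (a * r) by rewrite expn_gt0 a0.
have lo : 2 ^ r * a ^ (a * r) <= (a + 1) ^ (a * r).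
  by rewrite !expnM -expnMn leq_exp2r // double_expn_le.
have hi : (a + 1) ^ (a * r) <= a ^ (a * r) * s ^ a.
  by rewrite [a * r]mulnC !expnM -expnMn leq_exp2r.
by rewrite -(leq_pmul2r ar0) [s ^ a * _]mulnC (leq_trans lo hi).
Qed.

Lemma exp2_le_poly r s m : 36 ^ r <= 35 ^ r * s -> m <= 2 * r + 1 ->
  2 ^ m <= 2 ^ 12 * s ^ (2 ^ 12).
Proof.
move=> le mr; have s0 : 0 < s by case: s le => [|//]; rewrite muln0 leqn0 expn_eq0.
have root : 2 ^ r <= s ^ 35 := expn_ratio_bound (isT : 0 < 35) le.
apply: leq_trans (leq_pexp2l (isT : 0 < 2) mr) _.
rewrite expnD expn1 mulnC; apply: leq_mul => //.
rewrite mulnC expnM; apply: leq_trans (_ : (s ^ 35) ^ 2 <= _); first by rewrite leq_exp2r.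
by rewrite -expnM leq_pexp2l.
Qed.

Theorem theorem6 :
  exists c : nat, 0 < c /\
    forall n : nat, 2 <= n ->
    forall pi : seq (clause (pvar (fact n) (move n) (2 * n - 2))),
      refutation (MAP1_cnf n) pi -> 2 ^ n <= c * (size pi) ^ c.
Proof.
exists (2 ^ 12); split; first by rewrite expn_gt0.
case=> [|[|k]] // _ pi ref.
have [small|large] := ltnP k.+2 13.
  have pi0 : 0 < size pi by case/and3P: ref; case: (pi).
  apply: leq_trans (_ : 2 ^ 12 <= _); first by rewrite leq_exp2l //; lia.
  by rewrite leq_pmulr // expn_gt0 pi0.
by apply: exp2_le_poly (map1_refutation_size large ref) _; lia.
Qed.
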